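(* Let $n\ge2$, let $P$ be a partial $n$-Metric on a set $X$, let $\{x_i\}_{i\in\mathbb{N}}$ be a sequence in $X$ and let $r\in\mathbb{R}$. The following are equivalent: (a) $\{x_i\}$ is a Cauchy sequence with central distance $r$; (b) for every $\epsilon>0$ there is $N\in\mathbb{N}$ such that for all $i,j>N$, $-\epsilon<P(\langle x_i\rangle^{n-1},x_j)-r<\epsilon$; (c) for every $\epsilon>0$ there is $N\in\mathbb{N}$ such that for all $i\ge j>N$, $-\epsilon<P(\langle x_i\rangle^{n-1},x_j)-r<\epsilon$; (d) for every $\epsilon>0$ there is $N\in\mathbb{N}$ such that for all $i\ge j>N$, $-\epsilon<P(\langle x_j\rangle^{n-1},x_i)-r<\epsilon$.
   Context: Notation: $\langle a\rangle^k$ denotes the $k$-tuple $(a,\dots,a)$ inserted into an argument list. A partial $n$-Metric on $X$ is a function $P:X^n\to\mathbb{R}$ such that for all $x_1,\dots,x_n,a\in X$: (1) $P(\langle x_1\rangle^n)\le P(\langle x_1\rangle^{n-1},x_2)$; (2) $P$ is invariant under permutations of its $n$ arguments; (3) $P(\langle x_1\rangle^{n-1},x_2)=P(\langle x_1\rangle^n)$ and $P(\langle x_2\rangle^{n-1},x_1)=P(\langle x_2\rangle^n)$ iff $x_1=x_2$; (4) $P(x_1,\dots,x_n)\le P(x_1,\dots,x_{n-1},a)+P(\langle a\rangle^{n-1},x_n)-P(\langle a\rangle^n)$. A sequence $\{x_i\}$ is Cauchy with central distance $r\in\mathbb{R}$ if for every $\epsilon>0$ there is $N$ such that for all $i_1,\dots,i_n>N$,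 $-\epsilon<P(x_{i_1},\dots,x_{i_n})-r<\epsilon$. *)

From mathcomp Require Import all_boot all_order all_algebra fingroup perm.
From mathcomp Require Import reals.
Set Implicit Arguments. Unset Strict Implicit. Unset Printing Implicit Defensive.
Import Order.TTheory GRing.Theory Num.Theory.
Local Open Scope ring_scope.

(* An n-tuple of points of X is a function 'I_n -> X (argument positions
   0..n-1; position n.-1 is the last one). *)

Definition cst_tuple (n : nat) (X : Type) (a : X) : 'I_n -> X := fun _ => a.
Arguments cst_tuple n {X} a.

Definition last_tuple (n : nat) (X : Type) (a b : X) : 'I_n -> X :=
  fun i => if (i : nat) == n.-1 then b else a.
Arguments last_tuple n {X} a b.

Definition repl_last (n : nat) (X : Type) (x : 'I_n -> X) (a : X) : 'I_n -> X :=
  fun i => if (i : nat) == n.-1 then a else x i.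

Definition partial_nMetric (R : realType) (n : nat) (X : Type)
    (P : ('I_n -> X) -> R) : Prop :=
  (forall x1 x2 : X, P (cst_tuple n x1) <= P (last_tuple n x1 x2)) /\
  (forall (s : 'S_n) (x : 'I_n -> X), P (fun i => x (s i)) = P x) /\
  (forall x1 x2 : X,
      (P (last_tuple n x1 x2) = P (cst_tuple n x1) /\
       P (last_tuple n x2 x1) = P (cst_tuple n x2)) <-> x1 = x2) /\
  (* (4): x = (x_1,...,x_(n-1),x_n) written as repl_last y x_n *)
  (forall (y : 'I_n -> X) (xn a : X),
      P (repl_last y xn) <= P (repl_last y a) + P (last_tuple n a xn)
                            - P (cst_tuple n a)).

Definition cauchy_central (R : realType) (n : nat) (X : Type)
    (P : ('I_n -> X) -> R) (x : nat -> X) (r : R) : Prop :=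
  forall eps : R, 0 < eps -> exists N : nat,
    forall idx : 'I_n -> nat, (forall k, (N < idx k)%N) ->
      - eps < P (fun k => x (idx k)) - r < eps.

(* Both P(<x_i>^(n-1), x_j) and P(x_(i_1), ..., x_(i_n)) are controlled by
   replacing the entries of a tuple one at a time: by permutation invariance,
   axiom (4) applies at any position, so changing every entry of w into the
   corresponding entry of y costs at most n times the largest excess
   P(<w_k>^(n-1), y_k) - P(<w_k>^n).  Comparing with the constant tuple
   <x_m>^n gives (b) -> (a); comparing <x_i>^(n-1), x_j with <x_j>^n and
   using (1) for the lower bound shows that control of one orientation of
   P(<x_i>^(n-1), x_j) for each pair i, j suffices, i.e. (c) -> (b) and
   (d) -> (b). *)
From mathcomp Require Import all_boot all_order all_algebra fingroup perm.
From mathcomp Require Import reals lra.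
From Stdlib Require Import FunctionalExtensionality.

Set Implicit Arguments. Unset Strict Implicit. Unset Printing Implicit Defensive.
Import Order.TTheory GRing.Theory Num.Theory.
Local Open Scope ring_scope.

Lemma last_tuple_id (n : nat) (X : Type) (a : X) :
  last_tuple n a a = cst_tuple n a.
Proof. by apply: functional_extensionality => i; rewrite /last_tuple; case: ifP. Qed.

Lemma last_tupleP (n : nat) (X : Type) (a b : X) (k : 'I_n) :
  last_tuple n a b k = a \/ last_tuple n a b k = b.
Proof. by rewrite /last_tuple; case: ifP; [right | left]. Qed.

Definition replace_at (n : nat) (X : Type) (w : 'I_n -> X) (k : 'I_n) (v : X) :
    'I_n -> X :=
  fun i => if i == k then v else w i.

Lemma forall_pos_scale (R : realFieldType) (c : R) (F : R -> Prop) : 0 < c ->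
  (forall e, 0 < e -> F (c * e)) -> forall eps, 0 < eps -> F eps.
Proof.
move=> c_gt0 hF eps eps_gt0.
by have := hF (eps / c) (divr_gt0 eps_gt0 c_gt0); rewrite mulrC divfK ?gt_eqF.
Qed.

Section PartialMetric.
Variables (R : realType) (n : nat) (X : Type) (P : ('I_n -> X) -> R).
Hypothesis P_perm : forall (s : 'S_n) (y : 'I_n -> X), P (fun i => y (s i)) = P y.
Hypothesis P_triangle : forall (y : 'I_n -> X) (xn a : X),
  P (repl_last y xn) <= P (repl_last y a) + P (last_tuple n a xn) - P (cst_tuple n a).

Lemma le_replace_at (w : 'I_n -> X) (k : 'I_n) (b c : X) :
  P (replace_at w k b) <= P (replace_at w k c) + P (last_tuple n c b) - P (cst_tuple n c).
Proof.
have lt_last : (n.-1 < n)%N by rewrite ltn_predL (leq_ltn_trans _ (ltn_ord k)).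
pose s := tperm k (Ordinal lt_last).
have move_last v : P (replace_at w k v) = P (repl_last (fun i => w (s i)) v).
  rewrite -(P_perm s); congr P; apply: functional_extensionality => i.
  rewrite /replace_at /repl_last -[in s i == _](tpermR k (Ordinal lt_last)).
  by rewrite (inj_eq perm_inj).
by rewrite !move_last.
Qed.

Lemma le_entrywise (w y : 'I_n -> X) (d : R) :
  (forall k, P (last_tuple n (w k) (y k)) - P (cst_tuple n (w k)) <= d) ->
  P y <= P w + n%:R * d.
Proof.
move=> hd; pose z m (k : 'I_n) : X := if (k < m)%N then w k else y k.
have -> : w = z n by apply: functional_extensionality => k; rewrite /z ltn_ord.
have -> : y = z 0%N by [].
elim: {-2}n (leqnn n) => [|m IH] lt_mn; first by rewrite mul0r addr0.
pose km := Ordinal lt_mn.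
have zm_at_km : z m = replace_at (z m) km (y km).
  apply: functional_extensionality => i; rewrite /replace_at /z.
  by case: (i =P km) => [->|]; rewrite ?ltnn.
have zSm_at_km : z m.+1 = replace_at (z m) km (w km).
  apply: functional_extensionality => i; rewrite /replace_at /z ltnS leq_eqVlt.
  case: (i =P km) => [->|ne_i]; first by rewrite eqxx.
  by have /negbTE-> : (i : nat) != m by apply/eqP => eq_i; apply/ne_i/val_inj.
have := IH (ltnW lt_mn); have := le_replace_at (z m) km (y km) (w km).
rewrite -zm_at_km -zSm_at_km; have := hd km; rewrite -natr1 mulrDl mul1r; lra.
Qed.

Hypothesis P_cst_le : forall a b : X, P (cst_tuple n a) <= P (last_tuple n a b).

Lemma le_last_tuple_swap (a b : X) :
  P (last_tuple n a b)
    <= P (cst_tuple n b) + n%:R * (P (last_tuple n b a) - P (cst_tuple n b)).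
Proof.
apply: le_entrywise => k.
by case: (last_tupleP a b k) => ->; [| rewrite last_tuple_id subrr subr_ge0].
Qed.

Variables (x : nat -> X) (r : R).

Local Notation Q i j := (P (last_tuple n (x i) (x j))).

Definition cauchy_last_tuple : Prop :=
  forall eps : R, 0 < eps -> exists N : nat, forall i j : nat,
    (N < i)%N -> (N < j)%N -> - eps < Q i j - r < eps.

Lemma cauchy_central_last_tuple : cauchy_central P x r -> cauchy_last_tuple.
Proof.
move=> hA eps /hA[N hN]; exists N => i j lt_Ni lt_Nj.
pose idx (k : 'I_n) := if (k : nat) == n.-1 then j else i.
have -> : last_tuple n (x i) (x j) = (fun k => x (idx k)).
  by apply: functional_extensionality => k; rewrite /last_tuple /idx; case: ifP.
by apply: hN => k; rewrite /idx; case: ifP.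
Qed.

Lemma last_tuple_cauchy_central : cauchy_last_tuple -> cauchy_central P x r.
Proof.
have n_ge0 : 0 <= n%:R :> R := ler0n _ _.
move=> hB; apply: (@forall_pos_scale _ (2 * n%:R + 1)); first lra.
move=> e e_gt0; have [N hN] := hB e e_gt0; exists N => idx lt_N_idx.
pose m := N.+1; have lt_Nm : (N < m)%N := ltnSn N.
have /andP[lo_mm up_mm] := hN m m lt_Nm lt_Nm.
have up : P (fun k => x (idx k)) <= Q m m + n%:R * (2 * e).
  rewrite last_tuple_id; apply: le_entrywise => k.
  change (Q m (idx k) - P (cst_tuple n (x m)) <= 2 * e).
  by rewrite -last_tuple_id; have := hN _ _ lt_Nm (lt_N_idx k); lra.
have lo : Q m m <= P (fun k => x (idx k)) + n%:R * (2 * e).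
  rewrite last_tuple_id; apply: le_entrywise => k.
  change (Q (idx k) m - P (cst_tuple n (x (idx k))) <= 2 * e).
  rewrite -last_tuple_id; have := hN _ _ (lt_N_idx k) (lt_N_idx k).
  by have := hN _ _ (lt_N_idx k) lt_Nm; lra.
have ne_ge0 : 0 <= n%:R * e := mulr_ge0 n_ge0 (ltW e_gt0).
apply/andP; split; nra.
Qed.

Lemma cauchy_last_tuple_either :
  (forall eps : R, 0 < eps -> exists N : nat, forall i j : nat,
     (N < i)%N -> (N < j)%N -> - eps < Q i j - r < eps \/ - eps < Q j i - r < eps) ->
  cauchy_last_tuple.
Proof.
have n_ge0 : 0 <= n%:R :> R := ler0n _ _.
move=> hE; apply: (@forall_pos_scale _ (2 * n%:R + 1)); first lra.
move=> e e_gt0; have [N hN] := hE e e_gt0; exists N => i j lt_Ni lt_Nj.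
have near_diag k : (N < k)%N -> - e < Q k k - r < e by move=> lt_Nk; case: (hN k k).
have /andP[lo_ii _] := near_diag i lt_Ni; have /andP[lo_jj up_jj] := near_diag j lt_Nj.
have lo : Q i i <= Q i j by rewrite last_tuple_id.
have ne_ge0 : 0 <= n%:R * e := mulr_ge0 n_ge0 (ltW e_gt0).
case: (hN i j lt_Ni lt_Nj) => /andP[_ up_ij]; apply/andP; split; try nra.
have := le_last_tuple_swap (x i) (x j).
rewrite -last_tuple_id => swap.
have : n%:R * (Q j i - Q j j) <= n%:R * (2 * e) by apply: ler_wpM2l => //; lra.
nra.
Qed.

End PartialMetric.

Theorem theorem4p11 (R : realType) (n : nat) (X : Type)
    (P : ('I_n -> X) -> R) (x : nat -> X) (r : R) :
  (2 <= n)%N -> partial_nMetric P ->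
  [<-> cauchy_central P x r;
       (forall eps : R, 0 < eps -> exists N : nat, forall i j : nat,
          (N < i)%N -> (N < j)%N ->
          - eps < P (last_tuple n (x i) (x j)) - r < eps);
       (forall eps : R, 0 < eps -> exists N : nat, forall i j : nat,
          (j <= i)%N -> (N < j)%N ->
          - eps < P (last_tuple n (x i) (x j)) - r < eps);
       (forall eps : R, 0 < eps -> exists N : nat, forall i j : nat,
          (j <= i)%N -> (N < j)%N ->
          - eps < P (last_tuple n (x j) (x i)) - r < eps)].
Proof.
move=> _ [P_cst_le [P_perm [_ P_triangle]]].
have either := cauchy_last_tuple_either P_perm P_triangle P_cst_le.
tfae.
- exact: cauchy_central_last_tuple.
- move=> hB eps /hB[N hN]; exists N => i j le_ji lt_Nj.
  exact: hN (leq_trans lt_Nj le_ji) lt_Nj.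
- move=> hC; have hB : cauchy_last_tuple P x r.
    apply: either => eps /hC[N hN]; exists N => i j lt_Ni lt_Nj.
    by case: (leqP j i) => [le_ji | /ltnW le_ij]; [left | right]; exact: hN.
  move=> eps /hB[N hN]; exists N => i j le_ji lt_Nj.
  exact: hN lt_Nj (leq_trans lt_Nj le_ji).
- move=> hD; apply: (last_tuple_cauchy_central P_perm P_triangle).
  apply: either => eps /hD[N hN]; exists N => i j lt_Ni lt_Nj.
  by case: (leqP j i) => [le_ji | /ltnW le_ij]; [right | left]; exact: hN.
Qed.
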